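(* Let $n \ge 2$ be an integer and let $\mathcal{C}(I,n)$ denote the class of all vectors $\mathbf{X}=(X_1,\ldots,X_n)$ of independent random variables, each taking values in $[0,1]$. For $\mathbf{X}\in\mathcal{C}(I,n)$ put $U(\mathbf{X})=\max_{1\le i\le n} E X_i$ and $M(\mathbf{X})=E(\max_{1\le i\le n} X_i)$. Then $$\{(x,y)\mid x=U(\mathbf{X}),\ y=M(\mathbf{X}),\ \mathbf{X}\in\mathcal{C}(I,n)\} = \{(x,y)\mid 0\le x\le 1,\ x\le y\le 1-(1-x)^n\}.$$
   Context: $U(\mathbf{X})$ is the expected return of an observer who only knows the expectations of the $X_i$; $M(\mathbf{X})$ is the expected return of an observer (the ''prophet'') who sees all realizations and picks the largest. The set on the left is called the prophet region of $\mathcal{C}(I,n)$ for this pair of information levels. *)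

From HB Require Import structures.
From mathcomp Require Import all_boot all_order all_algebra.
From mathcomp Require Import all_classical all_reals all_analysis.
Set Implicit Arguments. Unset Strict Implicit. Unset Printing Implicit Defensive.
Import Order.TTheory GRing.Theory Num.Theory.
Local Open Scope classical_set_scope.
Local Open Scope ring_scope.

Definition mutually_independent {d} {T : measurableType d} {R : realType}
  (P : probability T R) (n : nat) (X : 'I_n -> {RV P >-> R}) : Prop :=
  forall B : 'I_n -> set R, (forall i, measurable (B i)) ->
    P (\bigcap_(i in [set: 'I_n]) (X i @^-1` B i)) =
    (\prod_(i < n) P (X i @^-1` B i))%E.

Definition U_val {d} {T : measurableType d} {R : realType}
  (P : probability T R) (n : nat) (X : 'I_n -> {RV P >-> R}) : \bar R :=
  \big[maxe/-oo%E]_(i < n) ('E_P[X i])%E.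

(* M(X) = E (max_i X_i); the pointwise maximum is taken with base value 0,
   which is harmless since all X_i are [0,1]-valued in the class C(I,n). *)
Definition M_val {d} {T : measurableType d} {R : realType}
  (P : probability T R) (n : nat) (X : 'I_n -> {RV P >-> R}) : \bar R :=
  ('E_P[fun w => (\big[Num.max/0%R]_(i < n) X i w)%R])%E.

Arguments mutually_independent {d T R} P {n} X.
Arguments U_val {d T R} P {n} X.
Arguments M_val {d T R} P {n} X.

(* Forward inclusion: pointwise X_j <= max_i X_i <= 1 - prod_i (1 - X_i), so
   x <= y <= 1 - E[prod_i (1 - X_i)], and by independence
   E[prod_i (1 - X_i)] = prod_i (1 - E X_i) >= (1 - x)^n.  Independence is only
   assumed for events, so the product rule for expectations is obtained by
   approximating each 1 - X_i from below, within 1/K, by a staircase function of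
   X_i, for which it reduces to the product rule for events; only the inequality
   prod E <= E prod is needed.
   Backward inclusion: for x <= y <= 1 - (1 - x)^n pick s in [0, x] with
   (1 - x)(1 - s)^(n-1) = 1 - y.  Independent Bernoulli variables with parameters
   x, s, ..., s, realised on {0,1}^n, have U = x and
   M = 1 - (1 - x)(1 - s)^(n-1) = y. *)

From HB Require Import structures.
From mathcomp Require Import all_boot all_order all_algebra.
From mathcomp Require Import all_classical all_reals all_analysis.
From mathcomp Require Import measurable_realfun.
From mathcomp Require Import ring lra.
Set Implicit Arguments.
Unset Strict Implicit.
Unset Printing Implicit Defensive.
Import Order.TTheory GRing.Theory Num.Theory.
Local Open Scope ring_scope.

Section staircase.
Variable R : realFieldType.

Lemma count_le_bounds (m : nat) (t : R) : 0 <= t <= m%:R ->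
  t - 1 <= \sum_(j < m) ((j.+1)%:R <= t)%R%:R <= t.
Proof.
elim: m t => [|m IHm] t /andP[t0 tm]; first by rewrite big_ord0; lra.
rewrite big_ord_recl /=.
have [t1|t1] := lerP 1 t; last first.
  rewrite big1 => [|j _]; last by rewrite leNgt (lt_le_trans t1)// ler1n.
  by rewrite mulr0n; lra.
rewrite mulr1n.
under eq_bigr => j _ do rewrite -natr1 -lerBrDr.
have := IHm (t - 1); rewrite -natr1 in tm; lra.
Qed.

(* For 0 <= t <= 1, [stair K t] is floor(K t) / K, written as a sum of
   indicators so that [stair K \o Y] is a combination of indicators of events. *)
Definition stair (K : nat) (t : R) : R :=
  K%:R^-1 * \sum_(j < K) ((j.+1)%:R <= K%:R * t)%R%:R.

Lemma stair_bounds (K : nat) (t : R) : (0 < K)%N -> 0 <= t <= 1 ->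
  0 <= stair K t /\ t - K%:R^-1 <= stair K t <= t.
Proof.
move=> K0 t01; have k0 : 0 < K%:R :> R by rewrite ltr0n.
have kK : K%:R * K%:R^-1 = 1 :> R by rewrite mulfV ?gt_eqF.
have Kt : 0 <= K%:R * t <= K%:R by nra.
have := count_le_bounds Kt; rewrite /stair.
have : 0 <= \sum_(j < K) ((j.+1)%:R <= K%:R * t)%R%:R :> R by exact: sumr_ge0.
move: (\sum_(j < K) _) => S S0 SKt.
have : 0 < K%:R^-1 :> R by rewrite invr_gt0.
nra.
Qed.

Lemma prodr_sub_le (I : Type) (s : seq I) (a b : I -> R) (e : R) :
  (forall i, 0 <= a i <= 1) -> (forall i, 0 <= b i <= 1) ->
  (forall i, a i - b i <= e) -> 0 <= e ->
  \prod_(i <- s) a i - \prod_(i <- s) b i <= (size s)%:R * e.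
Proof.
move=> a01 b01 abe e0; elim: s => [|i s IHs]; first by rewrite !big_nil subrr mul0r.
rewrite !big_cons /= -natr1.
have /andP[A0 A1] : 0 <= \prod_(j <- s) a j <= 1.
  by rewrite prodr_ge0 ?prodr_ile1// => j _; have /andP[] := a01 j.
have /andP[B0 B1] : 0 <= \prod_(j <- s) b j <= 1.
  by rewrite prodr_ge0 ?prodr_ile1// => j _; have /andP[] := b01 j.
move: IHs (a01 i) (b01 i) (abe i) => + /andP[ai0 ai1] /andP[bi0 bi1] abi.
move: (\prod_(j <- s) a j) (\prod_(j <- s) b j) A0 A1 B0 B1 => A B A0 A1 B0 B1 AB.
have sz0 : 0 <= (size s)%:R :> R by [].
(* a A - b B = a (A - B) + B (a - b) *)
have : a i * (A - B) <= (size s)%:R * e by have [] := lerP 0 (A - B); nra.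
have : B * (a i - b i) <= e by have [] := lerP 0 (a i - b i); nra.
lra.
Qed.

End staircase.

Lemma ler_add_invS (R : archiRealFieldType) (a b c : R) :
  (forall k : nat, a <= b + c / k.+1%:R) -> a <= b.
Proof.
move=> abc; apply/ler_addgt0Pr => e e0; have [c0|c0] := lerP c 0.
  by rewrite (le_trans (abc 0%N)) ?lerD2l// (le_trans _ (ltW e0)) ?pmulr_lle0.
set N := Num.Def.archi_bound (c / e).
have /ltW := @archi_boundP _ (c / e) (divr_ge0 (ltW c0) (ltW e0)).
rewrite -/N ler_pdivrMr // => cN.
rewrite (le_trans (abc N)) // lerD2l ler_pdivrMr ?ltr0n//.
by rewrite (le_trans cN)// mulrC ler_pM2l// ler_nat.
Qed.

Lemma bigmax_le_1_prod (R : realDomainType) (I : finType) (a : I -> R) :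
  (forall i, 0 <= a i <= 1) ->
  \big[Num.max/0]_i a i <= 1 - \prod_i (1 - a i).
Proof.
move=> a01; have b01 i : 0 <= 1 - a i <= 1 by have := a01 i; lra.
apply: bigmax_le => [|i _].
  by rewrite subr_ge0 prodr_ile1.
rewrite (bigD1 i) //=; have := a01 i.
have : 0 <= \prod_(j | j != i) (1 - a j) <= 1.
  by rewrite prodr_ile1 ?andbT// prodr_ge0// => j _; case/andP: (b01 j).
move: (\prod_(j | j != i) _) => P /andP[? ?] /andP[? ?]; nra.
Qed.

Section ge0_expectation.
Context d (T : measurableType d) (R : realType) (P : probability T R).
Local Open Scope ereal_scope.

Lemma ge0_expectationD (f g : T -> R) :
  measurable_fun setT f -> measurable_fun setT g ->
  (forall w, 0 <= f w)%R -> (forall w, 0 <= g w)%R ->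
  'E_P[fun w => (f w + g w)%R] = 'E_P[f] + 'E_P[g].
Proof.
move=> mf mg f0 g0; rewrite unlock -ge0_integralD//;
  try by [move=> w _; rewrite lee_fin | exact/measurable_EFinP].
Qed.

Lemma ge0_expectation_sum (I : Type) (s : seq I) (f : I -> T -> R) :
  (forall i, measurable_fun setT (f i)) -> (forall i w, 0 <= f i w)%R ->
  'E_P[fun w => (\sum_(i <- s) f i w)%R] = \sum_(i <- s) 'E_P[f i].
Proof.
move=> mf f0; rewrite unlock; under eq_integral do rewrite -sumEFin.
by rewrite ge0_integral_sum// => [i|i w _]; [exact/measurable_EFinP|rewrite lee_fin].
Qed.

Lemma ge0_expectationZl (k : R) (f : T -> R) : (0 <= k)%R ->
  measurable_fun setT f -> (forall w, 0 <= f w)%R ->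
  'E_P[fun w => (k * f w)%R] = k%:E * 'E_P[f].
Proof.
move=> k0 mf f0; rewrite unlock; under eq_integral do rewrite EFinM.
by rewrite ge0_integralZl_EFin// => [w _|]; [rewrite lee_fin|exact/measurable_EFinP].
Qed.

Lemma ge0_le_expectation (f g : T -> R) :
  measurable_fun setT f -> measurable_fun setT g ->
  (forall w, 0 <= f w <= g w)%R -> 'E_P[f] <= 'E_P[g].
Proof.
move=> mf mg fg; apply: expectation_le => // [w|w|]; first by case/andP: (fg w).
- by case/andP: (fg w) => /le_trans; apply.
- by apply: aeW => w; case/andP: (fg w).
Qed.

Lemma expectation_itv01 (f : T -> R) : measurable_fun setT f ->
  (forall w, 0 <= f w <= 1)%R ->
  'E_P[f] = (fine 'E_P[f])%:E /\ (0 <= fine 'E_P[f] <= 1)%R.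
Proof.
move=> mf f01.
have E0 : 0 <= 'E_P[f] by apply: expectation_ge0 => w; case/andP: (f01 w).
have E1 : 'E_P[f] <= 1.
  by rewrite -(expectation_cst P 1); apply: ge0_le_expectation.
have Efin : 'E_P[f] \is a fin_num by rewrite ge0_fin_numE// (le_lt_trans E1) ?ltey.
by rewrite -lee_fin -lee_fin fineK// E0 E1.
Qed.

Lemma expectation_one_sub (f : T -> R) : measurable_fun setT f ->
  (forall w, 0 <= f w <= 1)%R ->
  'E_P[fun w => (1 - f w)%R] = (1 - fine 'E_P[f])%:E.
Proof.
move=> mf f01; have g01 w : (0 <= 1 - f w <= 1)%R by have := f01 w; lra.
have f0 w : (0 <= f w)%R by case/andP: (f01 w).
have g0 w : (0 <= 1 - f w)%R by case/andP: (g01 w).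
have mg : measurable_fun setT (fun w => 1 - f w)%R.
  by apply: measurable_funB => //; exact: measurable_cst.
have [Ef _] := expectation_itv01 mf f01; have [Eg _] := expectation_itv01 mg g01.
rewrite Eg; congr (_%:E).
have := ge0_expectationD mg mf g0 f0.
under eq_fun do rewrite subrK.
rewrite expectation_cst Ef Eg -EFinD /= => /(congr1 fine) /=; lra.
Qed.

End ge0_expectation.

Lemma prod_indic_bigcap (T : Type) (R : comPzRingType) (I : finType)
  (B : I -> set T) (w : T) :
  \prod_i \1_(B i) w = \1_(\bigcap_(i in [set: I]) B i) w :> R.
Proof.
rewrite [RHS]indicE; have [Bw|] := pselect (forall i, B i w).
  by rewrite mem_set ?big1// => i _; rewrite indicE mem_set.
move=> /existsNP[i Biw]; rewrite memNset => [|Bw]; last exact/Biw/Bw.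
by rewrite (bigD1 i)//= indicE memNset// mul0r.
Qed.

Section independent_product.
Local Open Scope classical_set_scope.
Context d (T : measurableType d) (R : realType) (P : probability T R).
Variables (n : nat) (X : 'I_n -> {RV P >-> R}) (g : 'I_n -> R -> R).
Hypothesis indep : mutually_independent P X.
Hypothesis mg : forall i, measurable_fun setT (g i).
Hypothesis g01 : forall i w, 0 <= g i (X i w) <= 1.

Let mgX i : measurable_fun setT (fun w => g i (X i w)).
Proof. exact: measurableT_comp (mg i) (measurable_funPT (X i)). Qed.

Let level (K : nat) i (j : 'I_K) : set R := [set r | (j.+1)%:R <= K%:R * g i r].

Let measurable_level K i (j : 'I_K) : measurable (level i j).
Proof.
have := measurable_funM (measurable_cst (K%:R : R)) (mg i) measurableT
  (measurable_itv `[(j.+1)%:R, +oo[%O).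
by rewrite setTI set_itvcy.
Qed.

Let measurable_level_X K i (j : 'I_K) : measurable (X i @^-1` level i j).
Proof. exact: measurable_funPTI. Qed.

Let stair_indic K i w : stair K (g i (X i w)) =
  K%:R^-1 * \sum_(j < K) \1_(X i @^-1` level i j) w.
Proof.
congr (_ * _); apply: eq_bigr => j _; rewrite indicE; congr (nat_of_bool _ )%:R.
by apply/idP/idP => [h|/set_mem//]; apply/mem_set.
Qed.

Let pr K i (j : 'I_K) : R := fine (P (X i @^-1` level i j)).

Let prE K i (j : 'I_K) : P (X i @^-1` level i j) = (pr i j)%:E.
Proof. by rewrite fineK// fin_num_measure. Qed.

Let expectation_stair K i :
  ('E_P[fun w => stair K (g i (X i w))] = (K%:R^-1 * \sum_(j < K) pr i j)%:E)%E.
Proof.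
under eq_fun do rewrite stair_indic.
rewrite ge0_expectationZl//; last 2 first.
- by apply: measurable_sum => j; exact: measurable_indic.
- by move=> w; exact: sumr_ge0.
rewrite ge0_expectation_sum//; last by move=> j; exact: measurable_indic.
by under eq_bigr do rewrite expectation_indic// prE; rewrite sumEFin -EFinM.
Qed.

Lemma expectation_prod_stair K :
  ('E_P[fun w => (\prod_i stair K (g i (X i w)))%R] =
   \prod_i 'E_P[fun w => stair K (g i (X i w))])%E.
Proof.
under eq_bigr do rewrite expectation_stair; rewrite prodEFin.
have cap_level (f : {ffun 'I_n -> 'I_K}) :
    measurable (\bigcap_(i in [set: 'I_n]) X i @^-1` level i (f i)).
  by apply: fin_bigcap_measurable => // i _.
have prod_stair w : \prod_i stair K (g i (X i w)) = \prod_(i < n) K%:R^-1 *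
    \sum_(f : {ffun 'I_n -> 'I_K})
      \1_(\bigcap_(i in [set: 'I_n]) X i @^-1` level i (f i)) w.
  rewrite (eq_bigr _ (fun i _ => stair_indic K i w)) big_split /= bigA_distr_bigA.
  by congr (_ * _); apply: eq_bigr => f _; rewrite prod_indic_bigcap.
under eq_fun do rewrite prod_stair.
rewrite ge0_expectationZl ?prodr_ge0//; last 2 first.
- by apply: measurable_sum => f; exact: measurable_indic.
- by move=> w; exact: sumr_ge0.
rewrite ge0_expectation_sum//; last by move=> f; exact: measurable_indic.
rewrite big_split /= bigA_distr_bigA EFinM -sumEFin; congr (_ * _)%E.
apply: eq_bigr => f _; rewrite expectation_indic// indep//.
by rewrite (eq_bigr _ (fun i _ => prE i (f i))) prodEFin.
Qed.

Let measurable_stair K i : measurable_fun setT (fun w => stair K (g i (X i w))).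
Proof.
under eq_fun do rewrite stair_indic.
apply: measurable_funM; first exact: measurable_cst.
by apply: measurable_sum => j; exact: measurable_indic.
Qed.

Let stair_le K i w : (0 < K)%N ->
  0 <= stair K (g i (X i w)) <= g i (X i w).
Proof. by move=> K0; have [-> /andP[]] := stair_bounds K0 (g01 i w). Qed.

Let stair01 K i w : (0 < K)%N -> 0 <= stair K (g i (X i w)) <= 1.
Proof.
move=> K0; have /andP[-> /le_trans -> //] := stair_le i w K0.
by case/andP: (g01 i w).
Qed.

Let expectation_stair_bounds K i : (0 < K)%N ->
  fine 'E_P[fun w => g i (X i w)] - K%:R^-1 <=
    fine 'E_P[fun w => stair K (g i (X i w))] <=
  fine 'E_P[fun w => g i (X i w)].
Proof.
move=> K0.
have [ES _] := expectation_itv01 P (measurable_stair K i) (fun w => stair01 i w K0).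
have [EY _] := expectation_itv01 P (mgX i) (g01 i).
rewrite lerBlDr -!lee_fin -EY EFinD -ES -(expectation_cst P K%:R^-1).
rewrite -ge0_expectationD//; last 2 first.
- by move=> w; case/andP: (stair_le i w K0).
- by move=> w; rewrite invr_ge0.
apply/andP; split; apply: ge0_le_expectation => //.
- by apply: measurable_funD => //; exact: measurable_cst.
- move=> w; have [_ /andP[+ _]] := stair_bounds K0 (g01 i w).
  by case/andP: (g01 i w) => -> _; rewrite lerBlDr.
- by move=> w; exact: stair_le.
Qed.

Lemma prod_expectation_le_expectation_prod :
  (\prod_i 'E_P[fun w => g i (X i w)] <=
   'E_P[fun w => (\prod_i g i (X i w))%R])%E.
Proof.
have Y01 w : 0 <= \prod_i g i (X i w) <= 1.
  by rewrite prodr_ile1 ?andbT ?prodr_ge0// => i _; case/andP: (g01 i w).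
have mprod : measurable_fun setT (fun w => \prod_i g i (X i w)).
  by apply: measurable_prod => i _; exact: mgX.
have [Eprod _] := expectation_itv01 P mprod Y01.
rewrite (eq_bigr _ (fun i _ => (expectation_itv01 P (mgX i) (g01 i)).1)).
rewrite prodEFin Eprod lee_fin; apply: (@ler_add_invS _ _ _ n%:R) => k.
have K0 : (0 < k.+1)%N by [].
have prod_stair_le : \prod_i fine 'E_P[fun w => stair k.+1 (g i (X i w))] <=
    fine 'E_P[fun w => \prod_i g i (X i w)].
  rewrite -lee_fin -Eprod -prodEFin.
  rewrite (eq_bigr _ (fun i _ => esym
    (expectation_itv01 P (measurable_stair k.+1 i) (fun w => stair01 i w K0)).1)).
  rewrite -expectation_prod_stair; apply: ge0_le_expectation => // [|w].
    by apply: measurable_prod => i _; exact: measurable_stair.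
  rewrite ler_prod ?andbT => [|i _]; last exact: stair_le.
  by apply: prodr_ge0 => i _; case/andP: (stair_le i w K0).
have diff : \prod_(i < n) fine 'E_P[fun w => g i (X i w)] -
    \prod_i fine 'E_P[fun w => stair k.+1 (g i (X i w))] <= n%:R * k.+1%:R^-1.
  rewrite -[in n%:R](size_enum_ord n) enumT.
  apply: prodr_sub_le => [i|i|i|]; last by rewrite invr_ge0.
  - exact: (expectation_itv01 P (mgX i) (g01 i)).2.
  - exact: (expectation_itv01 P (measurable_stair k.+1 i) (stair01 i ^~ K0)).2.
  - by case/andP: (expectation_stair_bounds i K0); rewrite lerBlDr addrC -lerBlDr.
by rewrite -lerBlDl (le_trans _ diff) // lerD2l lerN2.
Qed.

End independent_product.

Lemma measurable_bigmaxr d (T : measurableType d) (R : realType) (I : Type)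
    (s : seq I) (F : I -> T -> R) :
  (forall i, measurable_fun setT (F i)) ->
  measurable_fun setT (fun w => \big[Num.max/0]_(i <- s) F i w).
Proof.
move=> mF; elim: s => [|i s IHs].
  by under eq_fun do rewrite big_nil; exact: measurable_cst.
by under eq_fun do rewrite big_cons; exact: measurable_maxr.
Qed.

Section prophet_necessary.
Context d (T : measurableType d) (R : realType) (P : probability T R).
Variables (n : nat) (X : 'I_n -> {RV P >-> R}).
Hypothesis indep : mutually_independent P X.
Hypothesis X01 : forall i w, 0 <= X i w <= 1.

Let mX i : measurable_fun setT (X i) := measurable_funPT (X i).

Let M_ge0 w : 0 <= \big[Num.max/0]_(i < n) X i w.
Proof.
elim/big_ind: _ => // [a b a0 _|i _]; first by rewrite le_max a0.
by case/andP: (X01 i w).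
Qed.

Lemma expectation_le_M_val i : ('E_P[X i] <= M_val P X)%E.
Proof.
apply: ge0_le_expectation => // [|w]; first exact: measurable_bigmaxr.
by case/andP: (X01 i w) => -> _; exact: le_bigmax.
Qed.

Lemma M_val_le_one_sub_prod :
  (M_val P X <= (1 - \prod_i (1 - fine 'E_P[X i]))%:E)%E.
Proof.
pose M w := \big[Num.max/0]_(i < n) X i w.
pose Q w := \prod_i (1 - X i w).
have mM : measurable_fun setT M by exact: measurable_bigmaxr.
have mQ : measurable_fun setT Q.
  by apply: measurable_prod => i _; apply: measurable_funB => //; exact: measurable_cst.
have MQ1 w : M w + Q w <= 1.
  by rewrite -lerBrDr; apply: bigmax_le_1_prod => i; exact: X01.
have Q01 w : 0 <= Q w <= 1.
  by rewrite prodr_ile1 ?andbT ?prodr_ge0// => i _; have := X01 i w; lra.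
have M01 w : 0 <= M w <= 1.
  by rewrite M_ge0 (le_trans _ (MQ1 w))// lerDl; case/andP: (Q01 w).
have [EM _] := expectation_itv01 P mM M01.
have [EQ _] := expectation_itv01 P mQ Q01.
have prod_le_EQ : \prod_i (1 - fine ('E_P[X i])%E) <= fine ('E_P[Q])%E.
  rewrite -lee_fin -EQ -prodEFin.
  rewrite (eq_bigr _ (fun i _ => esym (expectation_one_sub P (mX i) (X01 i)))).
  apply: (prod_expectation_le_expectation_prod indep (g := fun _ r => 1 - r)).
  - by move=> i; apply: measurable_funB => //; exact: measurable_cst.
  - by move=> i w; have := X01 i w; lra.
have EMQ1 : fine ('E_P[M])%E + fine ('E_P[Q])%E <= 1.
  rewrite -lee_fin EFinD -EM -EQ -(expectation_cst P 1) -ge0_expectationD//.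
  - apply: ge0_le_expectation => [||w]; first exact: measurable_funD.
      exact: measurable_cst.
    by rewrite MQ1 addr_ge0//; [case/andP: (M01 w)|case/andP: (Q01 w)].
  - by move=> w; case/andP: (Q01 w).
by rewrite (_ : M_val P X = 'E_P[M]%E)// EM lee_fin; lra.
Qed.

End prophet_necessary.

Lemma prophet_region_necessary d (T : measurableType d) (R : realType)
    (P : probability T R) (n : nat) (X : 'I_n -> {RV P >-> R}) (x y : R) :
  (0 < n)%N -> mutually_independent P X -> (forall i w, 0 <= X i w <= 1) ->
  x%:E = U_val P X -> y%:E = M_val P X ->
  0 <= x <= 1 /\ x <= y <= 1 - (1 - x) ^+ n.
Proof.
move=> n0 indep X01 Ux My.
pose e i := fine ('E_P[X i])%E.
have Ee i : ('E_P[X i])%E = (e i)%:E /\ 0 <= e i <= 1.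
  exact: (expectation_itv01 P (measurable_funPT (X i)) (X01 i)).
have [j _ Uj] := @eq_bigmax _ _ _ (-oo)%E (Ordinal n0) xpredT
  (fun i => ('E_P[X i])%E) isT (fun i _ => leNye _).
have xe : x = e j by move: Ux; rewrite /U_val Uj (Ee j).1 => -[].
have ex i : e i <= x.
  by rewrite xe -lee_fin -(Ee i).1 -(Ee j).1 -Uj; exact: le_bigmax.
have [_ /andP[x0 x1]] := Ee j; rewrite -xe in x0 x1.
have xy : x <= y by rewrite -lee_fin My xe -(Ee j).1; exact: expectation_le_M_val.
have ye : y <= 1 - \prod_i (1 - e i).
  by rewrite -lee_fin My; exact: M_val_le_one_sub_prod.
have pow_le_prod : (1 - x) ^+ n <= \prod_i (1 - e i).
  rewrite -[n in _ ^+ n]card_ord -prodr_const; apply: ler_prod => i _.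
  by have := ex i; case: (Ee i) => _ /andP[? ?]; lra.
by rewrite x0 x1 xy /=; lra.
Qed.

Definition bitvec (n : nat) := {ffun 'I_n -> bool}.
HB.instance Definition _ n := Finite.on (bitvec n).
HB.instance Definition _ n := isPointed.Build (bitvec n) [ffun=> false].
HB.instance Definition _ n := @isMeasurable.Build default_measure_display
  (bitvec n) discrete_measurable discrete_measurable0 discrete_measurableC
  discrete_measurableU.

Lemma measurable_bitvec_fun d (U : measurableType d) (n : nat)
    (f : bitvec n -> U) :
  measurable_fun setT f.
Proof. by []. Qed.

Lemma bigmax_bool_nat (R : realDomainType) (I : finType) (t : I -> bool) :
  \big[Num.max/0]_i (t i)%:R = 1 - \prod_i (1 - (t i)%:R) :> R.
Proof.
have [[i ti]|] := pselect (exists i, t i).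
  rewrite [\prod_i _](bigD1 i)//= ti subrr mul0r subr0.
  apply/le_anti/andP; split.
    by rewrite bigmax_le// => j _; case: (t j).
  by rewrite (le_trans _ (le_bigmax _ _ i)) ?ti.
move=> /forallNP t0; have {}t0 i : t i = false by apply/negbTE/negP; exact: t0.
rewrite big1 => [|i _]; last by rewrite t0 subr0.
by rewrite subrr; elim/big_ind: _ => // [a b -> ->|i _]; rewrite ?maxxx ?t0.
Qed.

Section bernoulli_product.
Context (R : realType) (n : nat) (p : 'I_n -> {i01 R}).
Local Open Scope classical_set_scope.

Definition bernoulli_prod_pmf (t : bitvec n) : R :=
  \prod_i bernoulli_pmf (p i)%:num (t i).

Lemma bernoulli_prod_pmf_ge0 t : 0 <= bernoulli_prod_pmf t.
Proof. by apply: prodr_ge0 => i _; apply: bernoulli_pmf_ge0; rewrite ge0 le1. Qed.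

Lemma sum_bernoulli_prod_pmf (h : 'I_n -> bool -> R) :
  \sum_(t : bitvec n) bernoulli_prod_pmf t * \prod_i h i (t i) =
  \prod_i \sum_b bernoulli_pmf (p i)%:num b * h i b.
Proof.
rewrite bigA_distr_bigA; apply: eq_bigr => t _.
by rewrite /bernoulli_prod_pmf -big_split.
Qed.

Lemma sum_bernoulli_prod_pmf1 : \sum_(t : bitvec n) bernoulli_prod_pmf t = 1.
Proof.
transitivity (\sum_(t : bitvec n) bernoulli_prod_pmf t * \prod_(i < n) (1 : R)).
  by apply: eq_bigr => t _; rewrite big1_eq mulr1.
rewrite (sum_bernoulli_prod_pmf (fun _ _ => 1)) big1// => i _.
by rewrite big_bool /= !mulr1 /bernoulli_pmf subrKC.
Qed.

Definition bernoulli_prod (A : set (bitvec n)) : \bar R :=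
  (\sum_(t \in A) (bernoulli_prod_pmf t)%:E)%E.

Let bernoulli_prod0 : bernoulli_prod set0 = 0%E.
Proof. by rewrite /bernoulli_prod fsbig_set0. Qed.

Let bernoulli_prod_ge0 A : (0 <= bernoulli_prod A)%E.
Proof.
rewrite /bernoulli_prod fsbig_finite//= sumEFin lee_fin.
by apply: sumr_ge0 => t _; exact: bernoulli_prod_pmf_ge0.
Qed.

Let bernoulli_prod_sigma_additive : semi_sigma_additive bernoulli_prod.
Proof.
have pmf_ge0 t : (0 <= (bernoulli_prod_pmf t)%:E)%E.
  by rewrite lee_fin bernoulli_prod_pmf_ge0.
move=> F mF tF mUF; apply: cvg_toP.
  apply: ereal_nondecreasing_is_cvgn => k m km.
  by apply: lee_sum_nneg_natr.
transitivity (\sum_(0 <= k <oo) \esum_(t in F k) (bernoulli_prod_pmf t)%:E)%E.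
  by apply: eq_eseriesr => k _; rewrite esum_fset//=.
by rewrite -nneseries_sum_bigcup// esum_fset//=.
Qed.

HB.instance Definition _ := isMeasure.Build _ _ _ bernoulli_prod
  bernoulli_prod0 bernoulli_prod_ge0 bernoulli_prod_sigma_additive.

Let bernoulli_prod_setT : bernoulli_prod [set: bitvec n] = 1%E.
Proof.
rewrite /bernoulli_prod (fsbigE (index_enum (bitvec n))) ?index_enum_uniq//=.
  by under eq_bigl do rewrite in_setT; rewrite sumEFin sum_bernoulli_prod_pmf1.
by move=> t _; rewrite mem_index_enum.
Qed.

HB.instance Definition _ :=
  @Measure_isProbability.Build _ _ R bernoulli_prod bernoulli_prod_setT.

Lemma expectation_bernoulli_prod (f : bitvec n -> R) : (forall t, 0 <= f t) ->
  ('E_bernoulli_prod[f] = (\sum_t bernoulli_prod_pmf t * f t)%:E)%E.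
Proof.
move=> f0; have fE : f = fun u => \sum_t f t * \1_[set t] u.
  apply/funext => u; rewrite (bigD1 u)//= indicE mem_set// mulr1 big1 ?addr0//.
  by move=> t tu; rewrite indicE memNset ?mulr0// => ut; rewrite ut eqxx in tu.
rewrite [in LHS]fE ge0_expectation_sum// => [|t u]; last by rewrite mulr_ge0.
rewrite (eq_bigr (fun t => (bernoulli_prod_pmf t * f t)%:E)) ?sumEFin// => t _.
rewrite ge0_expectationZl// expectation_indic// EFinM muleC.
by congr (_ * _)%E; exact: fsbig_set1.
Qed.

Lemma sum_bernoulli_prod_pmf_coord i (h : bool -> R) :
  \sum_(t : bitvec n) bernoulli_prod_pmf t * h (t i) =
  \sum_b bernoulli_pmf (p i)%:num b * h b.
Proof.
pose hi k b := if k == i then h b else 1.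
transitivity (\sum_(t : bitvec n) bernoulli_prod_pmf t * \prod_k hi k (t k)).
  by apply: eq_bigr => t _; rewrite (bigD1 i)//= /hi eqxx big1 ?mulr1// => k /negbTE ->.
rewrite sum_bernoulli_prod_pmf (bigD1 i)//= /hi eqxx [X in _ * X]big1 ?mulr1//.
move=> k /negbTE ->; under eq_bigr do rewrite mulr1.
by rewrite big_bool /bernoulli_pmf /= subrKC.
Qed.

Definition coord (i : 'I_n) (t : bitvec n) : R := (t i)%:R.

HB.instance Definition _ i := isMeasurableFun.Build _ _ (bitvec n) R (coord i)
  (measurable_bitvec_fun (coord i)).

Lemma coord_itv01 i t : 0 <= coord i t <= 1.
Proof. by rewrite /coord; case: (t i); rewrite ?lexx ?ler01. Qed.

Lemma coord_independent : mutually_independent bernoulli_prod coord.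
Proof.
move=> B _; rewrite -expectation_indic// expectation_bernoulli_prod//.
rewrite (eq_bigr (fun i => (\sum_b bernoulli_pmf (p i)%:num b * \1_(B i) b%:R)%:E)).
  rewrite prodEFin -sum_bernoulli_prod_pmf; congr (_%:E); apply: eq_bigr => t _.
  by rewrite -prod_indic_bigcap.
move=> i _; rewrite -expectation_indic// expectation_bernoulli_prod// /=.
by rewrite -(sum_bernoulli_prod_pmf_coord i (fun b => \1_(B i) b%:R)).
Qed.

Lemma expectation_coord i : ('E_bernoulli_prod[coord i] = (p i)%:num%:E)%E.
Proof.
rewrite expectation_bernoulli_prod => [|t]; last exact: ler0n.
by rewrite (sum_bernoulli_prod_pmf_coord i (fun b => b%:R)) big_bool /= mulr1 mulr0 addr0.
Qed.

Lemma M_val_coord : M_val bernoulli_prod coord = (1 - \prod_i (1 - (p i)%:num))%:E.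
Proof.
rewrite /M_val expectation_bernoulli_prod => [|t]; last first.
  by elim/big_ind: _ => // a b a0 b0; rewrite le_max a0.
congr (_%:E); transitivity
  (\sum_t (bernoulli_prod_pmf t - bernoulli_prod_pmf t * \prod_i (1 - (t i)%:R))).
  apply: eq_bigr => t _; rewrite -[X in X - _]mulr1 -mulrBr; congr (_ * _).
  exact: bigmax_bool_nat.
rewrite sumrB sum_bernoulli_prod_pmf1 (sum_bernoulli_prod_pmf (fun _ b => 1 - b%:R)).
by congr (1 - _); apply: eq_bigr => i _; rewrite big_bool /bernoulli_pmf /=; ring.
Qed.

End bernoulli_product.

Lemma prophet_parameter_exists (R : realType) (m : nat) (x y : R) : (0 < m)%N ->
  0 <= x <= 1 -> x <= y <= 1 - (1 - x) ^+ m.+1 ->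
  exists2 s, 0 <= s <= x & (1 - x) * (1 - s) ^+ m = 1 - y.
Proof.
move=> m0 /andP[x0 x1] /andP[xy yx].
have [x1e|x1'] := eqVneq x 1.
  move: yx; rewrite x1e subrr exprS mul0r subr0 => y1.
  by exists 0; [rewrite lexx ler01 | rewrite mul0r; lra].
have x_lt1 : x < 1 by rewrite lt_neqAle x1' x1.
(* 1 - s is the m-th root of (1 - y) / (1 - x), which lies in [(1 - x)^m, 1]. *)
pose r := (1 - y) / (1 - x).
have rE : (1 - x) * r = 1 - y by rewrite /r mulrC divfK// subr_eq0 eq_sym.
have r_le1 : r <= 1.
  by rewrite ler_pdivrMr ?subr_gt0// mul1r; lra.
have r_ge : (1 - x) ^+ m <= r.
  by rewrite ler_pdivlMr ?subr_gt0// -exprSr; lra.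
have r0 : 0 <= r by apply: le_trans r_ge; rewrite exprn_ge0// subr_ge0.
pose a := r `^ m%:R^-1.
have a0 : 0 <= a by exact: powR_ge0.
have am : a ^+ m = r.
  by rewrite -powR_mulrn// -powRrM mulVf ?powRr1// pnatr_eq0 -lt0n.
exists (1 - a); last by rewrite subKr am.
have [a1 xa] : a <= 1 /\ 1 - x <= a.
  by split; rewrite -(ler_pXn2r m0) ?nnegrE ?subr_ge0 ?expr1n ?am.
by apply/andP; split; lra.
Qed.

Lemma prophet_region_sufficient (R : realType) (n : nat) (x y : R) :
  (2 <= n)%N -> 0 <= x <= 1 -> x <= y <= 1 - (1 - x) ^+ n ->
  exists (d : measure_display) (T : measurableType d) (P : probability T R)
         (X : 'I_n -> {RV P >-> R}),
    mutually_independent P X /\ (forall i w, 0 <= X i w <= 1) /\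
    x%:E = U_val P X /\ y%:E = M_val P X.
Proof.
case: n => // m m0 /[dup] x01 /andP[x0 x1] xy.
have [s /andP[s0 sx] sE] := prophet_parameter_exists m0 x01 xy.
have s1 : s <= 1 by apply: le_trans x1.
pose p (i : 'I_m.+1) : {i01 R} := if i == ord0 then Itv01 x0 x1 else Itv01 s0 s1.
exists _, _, (bernoulli_prod p), (fun i => coord R i).
split; first exact: coord_independent.
split; first by move=> i t; exact: coord_itv01.
split.
  rewrite /U_val (eq_bigr _ (fun i _ => expectation_coord p i)).
  apply/le_anti/andP; split.
    by rewrite (le_trans _ (le_bigmax _ _ ord0)) /p ?eqxx.
  apply: bigmax_le => [|i _]; first exact: leNye.
  by rewrite /p lee_fin; case: ifP.
rewrite M_val_coord big_ord_recl /p eqxx /=.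
by rewrite (eq_bigr (fun=> 1 - s))// prodr_const card_ord sE subKr.
Qed.

Theorem theorem1 (R : realType) (n : nat) (hn : (2 <= n)%N) (x y : R) :
  (exists (d : measure_display) (T : measurableType d) (P : probability T R)
          (X : 'I_n -> {RV P >-> R}),
      mutually_independent P X /\
      (forall i w, 0 <= X i w <= 1) /\
      x%:E = U_val P X /\ y%:E = M_val P X)
  <->
  (0 <= x <= 1 /\ x <= y <= 1 - (1 - x) ^+ n).
Proof.
split=> [[d [T [P [X [indep [X01 [Ux My]]]]]]]|[x01 xy]].
  exact: prophet_region_necessary (leq_trans _ hn) indep X01 Ux My.
exact: prophet_region_sufficient.
Qed.
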